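(* Let $M\in\mathbb{R}^{n\times n}$ be a P-matrix. Then $M$ is a K-matrix if and only if for every $q\in\mathbb{R}^n$ such that $(M,q)$ is nondegenerate, the USO induced by $\mathrm{LCP}(M,q)$ is locally uniform.
   Context: For $v\in\{0,1\}^n$ and $I\subseteq[n]$, $v\oplus I$ flips the coordinates of $v$ in $I$; $v\oplus i=v\oplus\{i\}$. The $n$-cube has vertex set $\{0,1\}^n$ and edges $\{v,v\oplus i\}$; a unique-sink orientation (USO) is an orientation in which every subcube has exactly one sink. A P-matrix is a square real matrix with all principal minors positive; a K-matrix is a P-matrix whose off-diagonal entries are all non-positive. For $B\subseteq[n]$, $A_B$ is the matrix whose $i$th column is the $i$th column of $-M$ if $i\in B$ and of $I_n$ otherwise; $B(v)=\{j:v_j=1\}$. $(M,q)$ is nondegenerate if $(A_B^{-1}q)_i\ne0$ for all $B,i$; the USO induced by $\mathrm{LCP}(M,q)$ is given by $v\to v\oplus i$ iff $(A_{B(v)}^{-1}q)_i<0$. A USO is locally uniform if (i) whenever $u_i=u_j=0$ ($i\ne j$), $u\to u\oplus i$ and $u\to u\oplus j$, then $u\oplus i\to u\oplus\{i,j\}$ and $u\oplus j\to u\oplus\{i,j\}$; and (ii) whenever $u_i=u_j=0$, $u\oplus i\to u$ and $u\oplus j\to u$, then $u\oplus\{i,j\}\to u\oplus i$ and $u\oplus\{i,j\}\to u\oplus j$. *)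

From HB Require Import structures.
From mathcomp Require Import all_boot all_order all_algebra.
Set Implicit Arguments. Unset Strict Implicit. Unset Printing Implicit Defensive.
Import Order.TTheory GRing.Theory Num.Theory.
Local Open Scope ring_scope.

Section Defs.
Variables (R : realFieldType) (n : nat).

Definition principal_minor (M : 'M[R]_n) (S : {set 'I_n}) : R :=
  \det (mxsub (@enum_val _ (mem S)) (@enum_val _ (mem S)) M).

Definition P_matrix (M : 'M[R]_n) : Prop :=
  forall S : {set 'I_n}, 0 < principal_minor M S.

Definition K_matrix (M : 'M[R]_n) : Prop :=
  P_matrix M /\ (forall i j : 'I_n, i != j -> M i j <= 0).

Definition vertex := {ffun 'I_n -> bool}.

Definition flip (v : vertex) (i : 'I_n) : vertex :=
  [ffun j => if j == i then ~~ v j else v j].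

Definition Bset (v : vertex) : {set 'I_n} := [set j | v j].

Definition A_mat (M : 'M[R]_n) (B : {set 'I_n}) : 'M[R]_n :=
  \matrix_(i, j) (if j \in B then - M i j else (i == j)%:R).

Definition Ainvq (M : 'M[R]_n) (q : 'cV[R]_n) (B : {set 'I_n}) : 'cV[R]_n :=
  invmx (A_mat M B) *m q.

Definition lcp_nondegenerate (M : 'M[R]_n) (q : 'cV[R]_n) : Prop :=
  forall (B : {set 'I_n}) (i : 'I_n), Ainvq M q B i 0 != 0.

(* an orientation of the cube: o v i  <->  v -> v (+) i *)
Definition orientation := vertex -> 'I_n -> bool.

Definition lcp_orientation (M : 'M[R]_n) (q : 'cV[R]_n) : orientation :=
  fun v i => Ainvq M q (Bset v) i 0 < 0.

Definition locally_uniform (o : orientation) : Prop :=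
  forall (u : vertex) (i j : 'I_n), i != j -> u i = false -> u j = false ->
    ((o u i -> o u j -> o (flip u i) j /\ o (flip u j) i) /\
     (o (flip u i) i -> o (flip u j) j ->
        o (flip (flip u i) j) j /\ o (flip (flip u i) j) i)).
End Defs.

(* A_B is, up to a permutation of the coordinates, block lower triangular with diagonal blocks
   -M_BB and I, so det A_B = (-1)^|B| det M_BB and a P-matrix makes every A_B invertible.
   Adding i to B is a pivot step: writing c = A_B^-1 (-M_.i), x = A_(B+i)^-1 q and
   y = A_B^-1 q, we have y_i = c_i x_i and y_r = x_r + c_r x_i, where c_i < 0 is a ratio of
   principal minors. For a K-matrix the off-diagonal entries c_r are nonnegative (induction on
   |B|), and the two conditions of local uniformity follow from these sign patterns.
   Conversely, if M_ji > 0, any q with q_i < -M_ii and -M_ji < q_j < 0 makes both edges leave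
   the bottom vertex while the edge {i} -> {i,j} points back; such a q can be chosen
   nondegenerate by perturbing it along the moment curve (t, t^2, ..., t^n), since each
   coordinate of each A_B^-1 q is then a nonzero polynomial in t. *)
From HB Require Import structures.
From mathcomp Require Import all_boot all_order all_algebra fingroup perm.
Set Implicit Arguments. Unset Strict Implicit. Unset Printing Implicit Defensive.
Import Order.TTheory GRing.Theory Num.Theory.
Local Open Scope ring_scope.

Lemma det_mxsub_inj (R : comNzRingType) (m n : nat) (e : m = n) (g : 'I_m -> 'I_n)
    (A : 'M[R]_n) :
  injective g -> \det (mxsub g g A) = \det A.
Proof.
subst n => ginj; pose s := perm ginj.
have -> : mxsub g g A = row_perm s (col_perm s A).
  by apply/matrixP => i j; rewrite !mxE !permE.
rewrite row_permE col_permE !det_mulmx !det_perm odd_permV.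
by rewrite mulrC -mulrA -expr2 sqrr_sign mulr1.
Qed.

Lemma unitmx_row_neq0 (R : comUnitRingType) (n : nat) (A : 'M[R]_n) (k : 'I_n) :
  A \in unitmx -> row k A != 0.
Proof.
move=> Au; apply/eqP => rk0; have := row_mul k A (invmx A).
rewrite rk0 mul0mx mulmxV // => /rowP/(_ k)/eqP.
by rewrite !mxE eqxx mulr1n oner_eq0.
Qed.

Lemma exists_nonroot_between (R : numFieldType) (p : {poly R}) (d : R) :
  p != 0 -> 0 < d -> exists2 t, 0 < t < d & ~~ root p t.
Proof.
move=> p0 d0; pose s := [seq d / (m.+2)%:R | m <- iota 0 (size p)].
have us : uniq s.
  rewrite map_inj_uniq ?iota_uniq // => a b /(mulfI (lt0r_neq0 d0)).
  by move/invr_inj/eqP; rewrite eqr_nat !eqSS => /eqP.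
have : ~~ all (root p) s.
  by apply/negP => /(max_poly_roots p0)/(_ us); rewrite size_map size_iota ltnn.
case/allPn => _ /mapP[m _ ->] pt; exists (d / (m.+2)%:R) => //.
by rewrite divr_gt0 ?ltr0n //= ltr_pdivrMr ?ltr0n // ltr_pMr // ltr1n.
Qed.

Section LCP.
Variables (R : realFieldType) (n : nat) (M : 'M[R]_n).

Lemma det_A_mat (B : {set 'I_n}) :
  \det (A_mat M B) = (-1) ^+ #|B| * principal_minor M B.
Proof.
pose f := @enum_val _ (mem B).
pose f' := @enum_val _ (mem (~: B)).
pose g (x : 'I_(#|B| + #|~: B|)) : 'I_n :=
  match split x with inl a => f a | inr b => f' b end.
have ginj : injective g.
  move=> x y; rewrite /g -{2}(splitK x) -{2}(splitK y).
  case: (split x) => a; case: (split y) => b //= E.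
  - by rewrite (enum_val_inj E).
  - by have := enum_valP b; rewrite -/f' -E in_setC (enum_valP a).
  - by have := enum_valP a; rewrite -/f' E in_setC (enum_valP b).
  - by rewrite (enum_val_inj E).
have e : (#|B| + #|~: B|)%N = n by rewrite cardsC card_ord.
rewrite -(det_mxsub_inj e (A_mat M B) ginj).
have -> : mxsub g g (A_mat M B) =
    block_mx (- mxsub f f M) 0 (mxsub f' f (A_mat M B)) 1%:M.
  apply/matrixP => r s; rewrite -(splitK r) -(splitK s).
  case: (split r) => a; case: (split s) => b.
  - by rewrite block_mxEul !mxE /g !unsplitK (enum_valP b).
  - rewrite block_mxEur !mxE /g !unsplitK.
    have := enum_valP b; rewrite in_setC => /negbTE ->.
    case: eqP => // E; have := enum_valP b.
    by rewrite -/f' -E in_setC (enum_valP a).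
  - by rewrite block_mxEdl !mxE /g !unsplitK.
  - rewrite block_mxEdr !mxE /g !unsplitK.
    have := enum_valP b; rewrite in_setC => /negbTE ->.
    by rewrite (inj_eq enum_val_inj).
by rewrite det_lblock det1 mulr1 -scaleN1r detZ.
Qed.

Lemma A_mat0 : A_mat M set0 = 1%:M.
Proof. by apply/matrixP => r s; rewrite !mxE in_set0. Qed.

Lemma Ainvq0 q : Ainvq M q set0 = q.
Proof. by rewrite /Ainvq A_mat0 invmx1 mul1mx. Qed.

Definition pivot_col (B : {set 'I_n}) (i : 'I_n) : 'cV[R]_n := Ainvq M (- col i M) B.

Definition pivot_mx (B : {set 'I_n}) (i : 'I_n) : 'M[R]_n :=
  \matrix_(r, s) (if s == i then pivot_col B i r 0 else (r == s)%:R).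

Hypothesis PM : P_matrix M.

Lemma A_mat_unit B : A_mat M B \in unitmx.
Proof. by rewrite unitmxE unitfE det_A_mat mulf_neq0 ?signr_eq0 ?gt_eqF. Qed.

Lemma mulmx_Ainvq B q : A_mat M B *m Ainvq M q B = q.
Proof. by rewrite /Ainvq mulmxA mulmxV ?mul1mx // A_mat_unit. Qed.

Lemma Ainvq_unique B q x : A_mat M B *m x = q -> Ainvq M q B = x.
Proof. by move=> <-; rewrite /Ainvq mulKmx // A_mat_unit. Qed.

Lemma A_mat_setU1 B i : A_mat M B *m pivot_mx B i = A_mat M (i |: B).
Proof.
apply/matrixP => r s; rewrite !mxE in_setU1.
case: (eqVneq s i) => [->|si] /=.
  have /colP/(_ r) := mulmx_Ainvq B (- col i M).
  by rewrite !mxE => <-; apply: eq_bigr => t _; rewrite !mxE eqxx.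
rewrite (bigD1 s) //= big1 ?addr0 => [|t ts]; last first.
  by rewrite [pivot_mx _ _ _ _]mxE (negbTE si) (negbTE ts) mulr0.
by rewrite [pivot_mx _ _ _ _]mxE (negbTE si) eqxx mulr1 mxE.
Qed.

Lemma det_pivot_mx B i : \det (pivot_mx B i) = pivot_col B i i 0.
Proof.
rewrite (expand_det_row _ i) (bigD1 i) //= big1 ?addr0 => [|s si]; last first.
  by rewrite !mxE (negbTE si) eq_sym (negbTE si) mul0r.
rewrite mxE eqxx /cofactor -signr_odd addnn odd_double expr0 mul1r.
suff -> : row' i (col' i (pivot_mx B i)) = 1%:M by rewrite det1 mulr1.
apply/matrixP => a b; rewrite !mxE eq_sym (negbTE (neq_lift i b)).
by rewrite (inj_eq (@lift_inj _ i)).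
Qed.

Lemma pivot_col_lt0 (B : {set 'I_n}) i : i \notin B -> pivot_col B i i 0 < 0.
Proof.
move=> iB; have := congr1 determinant (A_mat_setU1 B i).
rewrite det_mulmx det_pivot_mx !det_A_mat cardsU1 iB exprS mulN1r.
rewrite -mulrA mulNr -mulrN.
move=> /(mulfI (negbT (signr_eq0 _ _))) pivot_minor.
by rewrite -(pmulr_rlt0 _ (PM B)) pivot_minor oppr_lt0.
Qed.

Lemma Ainvq_setU1 q B i : Ainvq M q B = pivot_mx B i *m Ainvq M q (i |: B).
Proof. by apply: Ainvq_unique; rewrite mulmxA A_mat_setU1 mulmx_Ainvq. Qed.

Lemma Ainvq_setU1_pivot q B i :
  Ainvq M q B i 0 = pivot_col B i i 0 * Ainvq M q (i |: B) i 0.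
Proof.
rewrite {1}(Ainvq_setU1 q B i) mxE (bigD1 i) //= big1 ?addr0 => [|t ti].
  by rewrite mxE eqxx.
by rewrite mxE (negbTE ti) eq_sym (negbTE ti) mul0r.
Qed.

Lemma Ainvq_setU1_other q B i r : r != i ->
  Ainvq M q B r 0 =
    Ainvq M q (i |: B) r 0 + pivot_col B i r 0 * Ainvq M q (i |: B) i 0.
Proof.
move=> ri; rewrite {1}(Ainvq_setU1 q B i) mxE (bigD1 i) //= (bigD1 r) //=.
rewrite big1 ?addr0 => [|t /andP[ti tr]]; last first.
  by rewrite mxE (negbTE ti) eq_sym (negbTE tr) mul0r.
by rewrite !mxE eqxx (negbTE ri) eqxx mul1r addrC.
Qed.

Lemma pivot_col0 i r : pivot_col set0 i r 0 = - M r i.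
Proof. by rewrite /pivot_col Ainvq0 !mxE. Qed.

Lemma P_matrix_diag_gt0 i : 0 < M i i.
Proof. by have := pivot_col_lt0 (negbT (in_set0 i)); rewrite pivot_col0 oppr_lt0. Qed.

Section KMatrix.
Hypothesis offdiag_le0 : forall i j, i != j -> M i j <= 0.

Lemma pivot_col_ge0 (B : {set 'I_n}) i j :
  i \notin B -> j \notin B -> j != i -> 0 <= pivot_col B i j 0.
Proof.
move Hk : #|B| => k; elim: k B Hk i j => [|k IH] B Hk i j iB jB ji.
  by rewrite (cards0_eq Hk) /pivot_col Ainvq0 !mxE oppr_ge0 offdiag_le0.
have [l lB] : exists l, l \in B by apply/set0Pn; rewrite -card_gt0 Hk.
have Hk' : #|B :\ l| = k by move: Hk; rewrite (cardsD1 l) lB add1n => -[].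
have notinBl t : t \notin B -> t \notin B :\ l by apply: contra => /setD1P[].
have lBl : l \notin B :\ l by rewrite setD11.
have li : l != i by apply: contraNneq iB => <-.
have jl : j != l by apply: contraNneq jB => ->.
have := Ainvq_setU1_pivot (- col i M) (B :\ l) l.
have := Ainvq_setU1_other (- col i M) (B :\ l) jl.
rewrite setD1K // -!/(pivot_col _ _) => yj yl.
have xl_le0 : pivot_col B i l 0 <= 0.
  rewrite -(nmulr_rge0 _ (pivot_col_lt0 lBl)) -yl.
  by apply: IH => //; apply: notinBl.
move/eqP: yj; rewrite -subr_eq => /eqP <-; rewrite subr_ge0.
apply: le_trans (IH _ Hk' i j (notinBl _ iB) (notinBl _ jB) ji).
by rewrite mulr_ge0_le0 //; apply: IH => //; apply: notinBl.
Qed.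

Lemma Ainvq_setU1_lt0 q (B : {set 'I_n}) i j :
  i \notin B -> j \notin B -> i != j ->
  Ainvq M q B i 0 < 0 -> Ainvq M q B j 0 < 0 -> Ainvq M q (i |: B) j 0 < 0.
Proof.
move=> iB jB ij yi_lt0 yj_lt0; have ji : j != i by rewrite eq_sym.
have xi_gt0 : 0 < Ainvq M q (i |: B) i 0.
  by rewrite -(nmulr_rlt0 _ (pivot_col_lt0 iB)) -Ainvq_setU1_pivot.
have := Ainvq_setU1_other q B ji => /eqP; rewrite -subr_eq => /eqP <-.
rewrite subr_lt0; apply: lt_le_trans yj_lt0 _.
by rewrite mulr_ge0 ?pivot_col_ge0 ?ltW.
Qed.

Lemma Ainvq_setU2_lt0 q (B : {set 'I_n}) i j :
  i \notin B -> j \notin B -> i != j ->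
  Ainvq M q (i |: B) i 0 < 0 -> Ainvq M q (j |: B) j 0 < 0 ->
  Ainvq M q (i |: (j |: B)) i 0 < 0.
Proof.
move=> iB jB ij xi_lt0 zj_lt0.
have ijB : i \notin j |: B by rewrite in_setU1 negb_or ij.
have yi_gt0 : 0 < Ainvq M q B i 0.
  by rewrite Ainvq_setU1_pivot nmulr_rgt0 ?pivot_col_lt0.
have zi_gt0 : 0 < Ainvq M q (j |: B) i 0.
  have := Ainvq_setU1_other q B ij => /eqP; rewrite -subr_eq => /eqP <-.
  rewrite subr_gt0; apply: le_lt_trans yi_gt0.
  by rewrite mulr_ge0_le0 ?pivot_col_ge0 ?ltW.
by rewrite -(nmulr_rgt0 _ (pivot_col_lt0 ijB)) -Ainvq_setU1_pivot.
Qed.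

End KMatrix.

Lemma Bset_flip (u : vertex n) i : u i = false -> Bset (flip u i) = i |: Bset u.
Proof.
move=> ui; apply/setP => t; rewrite !inE ffunE.
by case: (eqVneq t i) => [->|] //=; rewrite ui.
Qed.

Lemma K_matrix_locally_uniform q : K_matrix M -> locally_uniform (lcp_orientation M q).
Proof.
case=> _ offdiag_le0 u i j ij ui uj; rewrite /lcp_orientation.
have iB : i \notin Bset u by rewrite inE ui.
have jB : j \notin Bset u by rewrite inE uj.
have ji : j != i by rewrite eq_sym.
have uij : flip u i j = false by rewrite ffunE (negbTE ji).
rewrite !Bset_flip //; split=> [yi yj | xi zj].
  by split; apply: Ainvq_setU1_lt0.
by split; [|rewrite setUCA]; apply: Ainvq_setU2_lt0.
Qed.

Definition Ainvq_poly (q0 : 'cV[R]_n) (B : {set 'I_n}) (k : 'I_n) : {poly R} :=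
  \sum_(l < n) (invmx (A_mat M B) k l *: 'X^(l.+1)) + (Ainvq M q0 B k 0)%:P.

Lemma Ainvq_poly_eval q0 B k t :
  (Ainvq_poly q0 B k).[t] = Ainvq M (q0 + \col_l t ^+ l.+1) B k 0.
Proof.
rewrite /Ainvq_poly hornerD horner_sum hornerC /Ainvq mulmxDr [RHS]mxE addrC.
congr (_ + _).
by rewrite mxE; apply: eq_bigr => l _; rewrite hornerZ hornerXn mxE.
Qed.

Lemma Ainvq_poly_neq0 q0 B k : Ainvq_poly q0 B k != 0.
Proof.
have [l Wl] : exists l, invmx (A_mat M B) k l != 0.
  have /(unitmx_row_neq0 k) Wk_neq0 : invmx (A_mat M B) \in unitmx.
    by rewrite unitmx_inv A_mat_unit.
  apply/existsP; apply: contraNT Wk_neq0 => /existsPn W0; apply/eqP/rowP => t.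
  by rewrite !mxE; apply/eqP/negPn/W0.
apply: contra Wl => /eqP /(congr1 (fun p : {poly R} => p`_l.+1)).
rewrite coef0 coefD coefC /= addr0 coef_sum => <-.
rewrite (bigD1 l) //= coefZ coefXn eqxx mulr1 big1 ?addr0 // => t tl.
by rewrite coefZ coefXn eqSS (inj_eq val_inj) eq_sym (negbTE tl) mulr0.
Qed.

Lemma exists_nondegenerate_near (q0 : 'cV[R]_n) (d : R) : 0 < d ->
  exists q, lcp_nondegenerate M q /\ forall l, q0 l 0 < q l 0 < q0 l 0 + d.
Proof.
move=> d_gt0; pose p := \prod_(B : {set 'I_n}) \prod_(k : 'I_n) Ainvq_poly q0 B k.
have p_neq0 : p != 0.
  by apply/prodf_neq0 => B _; apply/prodf_neq0 => k _; apply: Ainvq_poly_neq0.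
have min_gt0 : 0 < Order.min 1 d by rewrite lt_min ltr01.
have [t /andP[t_gt0]] := exists_nonroot_between p_neq0 min_gt0.
rewrite lt_min => /andP[t_lt1 t_ltd] pt; exists (q0 + \col_l t ^+ l.+1); split.
  move=> B k; rewrite -Ainvq_poly_eval.
  move: pt; rewrite rootE /p horner_prod => /prodf_neq0/(_ B isT).
  by rewrite horner_prod => /prodf_neq0/(_ k isT).
move=> l; rewrite !mxE ltrDl exprn_gt0 //= ltrD2l.
by apply: le_lt_trans t_ltd; rewrite ler_iXnr ?ltW.
Qed.

Lemma lcp_orientation_not_locally_uniform (q : 'cV[R]_n) (i j : 'I_n) :
  i != j -> 0 < M j i -> q i 0 < - M i i -> - M j i < q j 0 -> q j 0 < 0 ->
  ~ locally_uniform (lcp_orientation M q).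
Proof.
move=> ij Mji_gt0 qi_lt qj_gt qj_lt0 LU; have ji : j != i by rewrite eq_sym.
pose u : vertex n := [ffun => false].
have Bu : Bset u = set0 by apply/setP => l; rewrite !inE ffunE.
have [LU_out _] := LU u i j ij (ffunE _ _) (ffunE _ _).
have [out_i out_j] : lcp_orientation M q u i /\ lcp_orientation M q u j.
  rewrite /lcp_orientation Bu Ainvq0; split=> //.
  by apply: lt_trans qi_lt _; rewrite oppr_lt0 P_matrix_diag_gt0.
have [] := LU_out out_i out_j.
rewrite /lcp_orientation Bset_flip ?ffunE // Bu setU0.
set x := Ainvq M q [set i] => xj_lt0 _.
have := Ainvq_setU1_pivot q set0 i; have := Ainvq_setU1_other q set0 ji.
rewrite !pivot_col0 Ainvq0 setU0 -/x => qj_eq qi_eq.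
have xi_gt1 : 1 < x i 0.
  have Mx : M i i * x i 0 = - q i 0 by rewrite qi_eq mulNr opprK.
  by rewrite -(ltr_pMr _ (P_matrix_diag_gt0 i)) Mx ltrNr.
have xj_eq : x j 0 = q j 0 + M j i * x i 0 by rewrite qj_eq mulNr subrK.
suff : 0 < x j 0 by rewrite ltNge ltW.
rewrite xj_eq; apply: lt_trans (_ : q j 0 + M j i < _).
  by rewrite -ltrBlDr sub0r.
by rewrite ltrD2l ltr_pMr.
Qed.

End LCP.

Theorem mainTheorem7 (R : realFieldType) (n : nat) (M : 'M[R]_n) :
  P_matrix M ->
  (K_matrix M <->
   forall q : 'cV[R]_n, lcp_nondegenerate M q -> locally_uniform (lcp_orientation M q)).
Proof.
move=> PM; split=> [KM q _ | LU]; first exact: K_matrix_locally_uniform.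
split=> // j i ji; rewrite leNgt; apply/negP => Mji_gt0.
have Mii_gt0 := P_matrix_diag_gt0 PM i.
pose q0 : 'cV[R]_n :=
  \col_l (if l == i then - (M i i *+ 2) else if l == j then - M j i else 0).
have d_gt0 : 0 < Order.min (M i i) (M j i) by rewrite lt_min Mii_gt0.
have [q [nd q_near]] := exists_nondegenerate_near PM q0 d_gt0.
have /andP[_ qi_lt] := q_near i; have /andP[qj_gt qj_lt] := q_near j.
move: qi_lt qj_gt qj_lt; rewrite !mxE (negbTE ji) !eqxx => qi_lt qj_gt qj_lt.
have ij : i != j by rewrite eq_sym.
apply: (lcp_orientation_not_locally_uniform PM ij Mji_gt0 _ qj_gt _ (LU q nd)).
  apply: lt_le_trans qi_lt _.
  by rewrite mulr2n opprD -addrA gerDl addrC subr_le0 ge_min lexx.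
by apply: lt_le_trans qj_lt _; rewrite addrC subr_le0 ge_min lexx orbT.
Qed.
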